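(* Let $(\mathbf k,\log)$ be an ordered field with surjective logarithm and $(\mathbf k((G)),l)$ a series field with prelogarithmic section. Let $H\ne\{1\}$ be a subgroup of $G$ satisfying the growth axiom. Define $H^{-1}=\{1\}$, $H^0=H$ and inductively $H^{n+1}=H^n\cdot\mathrm{Exp}\,\mathbf k(((H^n)^{>H^{n-1}}))\subseteq G^{\#(n+1)}$. Then for every $n\ge0$: $H^n$ is a proper convex subgroup of $H^{n+1}$, $H^{n+1}$ is the anti-lexicographic product of $H^n$ and $\mathrm{Exp}\,\mathbf k(((H^n)^{>H^{n-1}}))$, and $\mathrm{Log}(h)<|f|$ for all $h\in H^{n+1}$ and all nonzero $f\in\mathbf k(((H^{n+1})^{>H^n}))$.
   Context: Let $\mathbf k$ be an ordered field and $(G,\cdot,<)$ a totally ordered abelian group (written multiplicatively). $\mathbf k((G))$ denotes the field of generalized power series $\alpha=\sum_{g\in G}\alpha(g)\,g$ ($\alpha(g)\in\mathbf k$) with anti-well-ordered support, usual operations, canonical valuation $v(\alpha)=\max\operatorname{supp}\alpha$ and ordering $\alpha>0$ iff $\alpha(v(\alpha))>0$; $\mathbf k$, $G$ are identified with subsets of $\mathbf k((G))$. For $S\subseteq G$, $\mathbf k((S))=\{\alpha:\operatorname{supp}\alpha\subseteq S\}$. For a subgroup $H$ and $A\subseteq G$, $H^{>A}=\{h\in H:h>a\ \forall a\in A\}$, $H^{>1}=\{h\in H:h>1\}$. Every $\alpha>0$ is uniquely $\alpha=g\,a(1+\varepsilon)$ with $g=v(\alpha)$, $a\in\mathbf k^{>0}$,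 $\varepsilon\in\mathbf k((G^{<1}))$. A prelogarithmic section is an order-preserving group embedding $l:(G,\cdot)\to(\mathbf k((G^{>1})),+)$; $\log:(\mathbf k^{>0},\cdot)\to(\mathbf k,+)$ is an order-preserving group isomorphism. The prelogarithm of $l$ is $L(g\,a(1+\varepsilon))=l(g)+\log a+\sum_{i\ge1}(-1)^{i-1}\varepsilon^i/i$. Exponential extension: $G^\#$ is the ordered abelian group of formal symbols $e(\alpha)$, $\alpha\in\mathbf k((G^{>1}))$, with $e(\alpha)e(\beta)=e(\alpha+\beta)$, $e(\alpha)<e(\beta)\iff\alpha<\beta$, and $e(l(g))$ identified with $g\in G$; $l^\#(e(\alpha))=\alpha$ is a prelogarithmic section of $\mathbf k((G^\#))$ extending $l$. Iterating: $G^{\#n}$, $l^{\#n}$, prelogarithms $L^{\#n}$. The EL-series field is $\mathbf k((G))^{EL}=\bigcup_n\mathbf k((G^{\#n}))$ with $\mathrm{Log}=\bigcup_nL^{\#n}$, an order preserving isomorphism from the positive elements onto $(\mathbf k((G))^{EL},+)$; $\mathrm{Exp}=\mathrm{Log}^{-1}$. A subgroup $H\ne\{1\}$ of $G$ satisfies the growth axiom if $\mathrm{Log}(h)<|f|$ for all $h\in H$ and all nonzero $f\in\mathbf k((H^{>1}))$. ''Anti-lexicographic product'' of subgroups $A,B$: the group is $A\cdot B$, the product is direct and $A$ is convex in it. *)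

From HB Require Import structures.
From mathcomp Require Import all_boot all_order all_algebra.
From Stdlib Require Import ClassicalEpsilon.
Set Implicit Arguments. Unset Strict Implicit. Unset Printing Implicit Defensive.
Import Order.TTheory GRing.Theory Num.Theory.
Local Open Scope ring_scope.

(* A "raw ordered group": carrier, multiplication, unit, inverse, strict
   order, and a predicate singling out the actual elements of the group
   (the carrier of a constructed level may contain junk elements). *)
Record ROG := MkROG {
  car :> Type;
  gop : car -> car -> car;
  gone : car;
  ginv : car -> car;
  glt : car -> car -> Prop;
  gvalid : car -> Prop }.

Definition ordered_abelian_group (G : Type) (mul : G -> G -> G) (one : G)
  (inv : G -> G) (lt : G -> G -> Prop) : Prop :=
  (forall x y z, mul x (mul y z) = mul (mul x y) z) /\
  (forall x y, mul x y = mul y x) /\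
  (forall x, mul one x = x) /\
  (forall x, mul (inv x) x = one) /\
  (forall x, ~ lt x x) /\
  (forall x y z, lt x y -> lt y z -> lt x z) /\
  (forall x y, lt x y \/ x = y \/ lt y x) /\
  (forall x y z, lt x y -> lt (mul x z) (mul y z)).

Definition base_rog (G : Type) (mul : G -> G -> G) (one : G) (inv : G -> G)
  (lt : G -> G -> Prop) : ROG := @MkROG G mul one inv lt (fun _ => True).

Section Series.
Variable k : realFieldType.
Variable M : ROG.

(* formal series sum_g a(g) g, represented by their coefficient function *)
Definition ser := M -> k.
Definition supp (a : ser) : M -> Prop := fun x => a x != 0.

Definition anti_wo (P : M -> Prop) : Prop :=
  forall Q : M -> Prop, (exists x, Q x) -> (forall x, Q x -> P x) ->
    exists m, Q m /\ forall x, Q x -> x = m \/ glt x m.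

(* a belongs to k((S)) : anti-well-ordered support contained in S *)
Definition is_ser_on (S : M -> Prop) (a : ser) : Prop :=
  anti_wo (supp a) /\ forall x, supp a x -> S x.

Definition ser0 : ser := fun _ => 0.
Definition seradd (a b : ser) : ser := fun x => a x + b x.
Definition seropp (a : ser) : ser := fun x => - a x.
Definition serlt (a b : ser) : Prop :=
  exists g, 0 < b g - a g /\ forall h, glt g h -> b h - a h = 0.
Definition serpos (a : ser) : Prop := serlt ser0 a.
Definition serabs (a : ser) : ser :=
  if excluded_middle_informative (serpos a) then a else seropp a.

Definition above (A B : M -> Prop) : M -> Prop :=
  fun x => A x /\ forall b, B b -> glt b x.

(* Exponential extension M^# : symbols e(alpha), alpha in k((M^{>1})),
   represented by alpha itself; e(a)e(b)=e(a+b), e(a)<e(b) iff a<b. *)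
Definition sharp : ROG :=
  @MkROG ser seradd ser0 seropp serlt
    (is_ser_on (fun x => gvalid x /\ glt (gone M) x)).

Definition setmul (A B : M -> Prop) : M -> Prop :=
  fun z => exists a b, A a /\ B b /\ z = gop a b.
Definition subgroup (A : M -> Prop) : Prop :=
  A (gone M) /\ (forall x y, A x -> A y -> A (gop x y)) /\
  (forall x, A x -> A (ginv x)).
Definition gle (x y : M) : Prop := glt x y \/ x = y.
Definition convex_in (A X : M -> Prop) : Prop :=
  forall a1 a2 x, A a1 -> A a2 -> X x -> gle a1 x -> gle x a2 -> A x.
Definition proper_convex_subgroup (A X : M -> Prop) : Prop :=
  subgroup A /\ subgroup X /\ (forall x, A x -> X x) /\
  (exists x, X x /\ ~ A x) /\ convex_in A X.
Definition antilex_product (A B X : M -> Prop) : Prop :=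
  subgroup A /\ subgroup B /\ (forall x, X x <-> setmul A B x) /\
  (forall x, A x -> B x -> x = gone M) /\ convex_in A X.
End Series.

Definition img_of (M N : ROG) (f : M -> N) (P : M -> Prop) : N -> Prop :=
  fun y => exists x, P x /\ f x = y.

Definition push (k : realFieldType) (M N : ROG) (phi : M -> N) (a : M -> k)
  : N -> k :=
  fun y => match excluded_middle_informative (exists x, phi x = y) with
           | left H => a (proj1_sig (constructive_indefinite_description _ H))
           | right _ => 0
           end.

Section Tower.
Variables (k : realFieldType) (G0 : ROG) (l : G0 -> (G0 -> k)).

Fixpoint lvl (n : nat) : ROG :=
  match n with O => G0 | S m => sharp k (lvl m) end.

(* identification of G^{#n} inside G^{#(n+1)}: g |-> e(l^{#n}(g)) *)
Fixpoint up (n : nat) : lvl n -> lvl n.+1 :=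
  match n return lvl n -> lvl n.+1 with
  | O => l
  | S m => push (@up m)
  end.

(* Log on the monomial group G^{#n}: Log h = l^{#n}(h), a series in
   k((G^{#n})) (l^{#n}(e(alpha)) = alpha, viewed in k((G^{#n}))). *)
Definition Log (n : nat) (h : lvl n) : lvl n -> k := up h.

(* Exp k((S)) for S a set of monomials of G^{#n} lying above 1:
   the monomials e(alpha) of G^{#(n+1)} with alpha in k((S)). *)
Definition Expset (n : nat) (S : lvl n -> Prop) : lvl n.+1 -> Prop :=
  fun x => @gvalid (lvl n.+1) x /\ is_ser_on S x.

(* HP H n = (H^n, H^{n-1}) as subsets of G^{#n}. *)
Fixpoint HP (H : G0 -> Prop) (n : nat) : (lvl n -> Prop) * (lvl n -> Prop) :=
  match n return (lvl n -> Prop) * (lvl n -> Prop) with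
  | O => (H, fun x => x = gone G0)
  | S m =>
      let c := (HP H m).1 in let p := (HP H m).2 in
      (setmul (img_of (@up m) c) (@Expset m (above c p)), img_of (@up m) c)
  end.

Definition Hpow (H : G0 -> Prop) (n : nat) : lvl n -> Prop := (HP H n).1.

Definition growth_rel (n : nat) (X S : lvl n -> Prop) : Prop :=
  forall h, X h -> forall f : lvl n -> k, is_ser_on S f -> f <> @ser0 k (lvl n) ->
    serlt (Log h) (serabs f).
End Tower.

(* Write u = l^{#n} and S = (H^n)^{>H^{n-1}}.  An element of
   H^{n+1} is u(a) + al with a in H^n and al in k((S)) (written additively in
   G^{#(n+1)}).  The growth axiom for H^n says |al| > u(a) for every nonzero
   such al and every a in H^n; hence al can neither equal nor be squeezed
   between elements of u(H^n), which gives the trivial intersection and the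
   convexity of H^n in H^{n+1}.  For the growth axiom at level n+1, every
   monomial of u(a) + al is bounded by an element of H^n (for u(a) because
   |u(a)| < b for any monomial b in S), so Log(u(a) + al) vanishes from the
   leading monomial of any f in k((H^{n+1})^{>H^n}) upward, while |f| is
   positive there. *)
From HB Require Import structures.
From mathcomp Require Import all_boot all_order all_algebra.
From mathcomp Require Import ring.
From Stdlib Require Import ClassicalEpsilon Classical FunctionalExtensionality.
Import Order.TTheory GRing.Theory Num.Theory.
Local Open Scope ring_scope.
Set Implicit Arguments. Unset Strict Implicit.

Record linear_on (M : ROG) : Prop := LinearOn {
  glt_irr : forall x : M, ~ glt x x;
  glt_trans : forall x y z : M, gvalid x -> gvalid y -> gvalid z ->
    glt x y -> glt y z -> glt x z;
  glt_total : forall x y : M, gvalid x -> gvalid y -> glt x y \/ x = y \/ glt y x;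
  gone_valid : gvalid (gone M) }.

Section Series.
Variable k : realFieldType.
Variable M : ROG.

Definition supp_valid (a : M -> k) : Prop := forall x, supp a x -> gvalid x.

Definition monom (b : M) : M -> k :=
  fun x => if excluded_middle_informative (x = b) then 1 else 0.

Lemma ser_ext (a b : M -> k) : (forall x, a x = b x) -> a = b.
Proof. exact: functional_extensionality. Qed.

Lemma seradd0l (a : M -> k) : seradd (@ser0 k M) a = a.
Proof. by apply: ser_ext => x; rewrite /seradd /ser0 add0r. Qed.

Lemma seradd0r (a : M -> k) : seradd a (@ser0 k M) = a.
Proof. by apply: ser_ext => x; rewrite /seradd /ser0 addr0. Qed.

Lemma supp_add (a b : M -> k) x : supp (seradd a b) x -> supp a x \/ supp b x.
Proof.
rewrite /supp /seradd => H; case: (eqVneq (a x) 0) => [ax|]; last by left.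
by right; rewrite ax add0r in H.
Qed.

Lemma supp_opp (a : M -> k) x : supp (seropp a) x <-> supp a x.
Proof. by rewrite /supp /seropp oppr_eq0. Qed.

Lemma supp_diff (a b : M -> k) x : b x - a x != 0 -> supp a x \/ supp b x.
Proof.
move=> H; case: (eqVneq (a x) 0) => [ax|]; last by left.
by right; rewrite /supp; rewrite ax subr0 in H.
Qed.

Lemma valid_diff (a b : M -> k) x :
  supp_valid a -> supp_valid b -> b x - a x != 0 -> gvalid x.
Proof. by move=> Va Vb /supp_diff [/Va|/Vb]. Qed.

Lemma anti_wo_sub (P P' : M -> Prop) :
  (forall x, P x -> P' x) -> anti_wo P' -> anti_wo P.
Proof. by move=> HP HW Q HQ HQP; apply: HW => // x /HQP /HP. Qed.

Lemma is_ser_on_mono (S S' : M -> Prop) (a : M -> k) :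
  (forall x, S x -> S' x) -> is_ser_on S a -> is_ser_on S' a.
Proof. by move=> H [W Hs]; split=> // x /Hs /H. Qed.

Lemma is_ser_on_supp_valid S (a : M -> k) :
  (forall x, S x -> gvalid x) -> is_ser_on S a -> supp_valid a.
Proof. by move=> V [_ H] x /H /V. Qed.

Lemma is_ser_on0 S : is_ser_on S (@ser0 k M).
Proof.
split=> [Q [x Qx] HQ|x]; last by rewrite /supp /ser0 eqxx.
by have := HQ x Qx; rewrite /supp /ser0 eqxx.
Qed.

Lemma is_ser_on_opp S (a : M -> k) : is_ser_on S a -> is_ser_on S (seropp a).
Proof.
move=> [W H]; split; first by apply: anti_wo_sub W => x /supp_opp.
by move=> x /supp_opp /H.
Qed.

Lemma serlt_irr (a : M -> k) : ~ serlt a a.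
Proof. by move=> [g [H _]]; rewrite subrr ltxx in H. Qed.

Lemma serlt_diff_ext (a b a' b' : M -> k) :
  (forall t, b t - a t = b' t - a' t) -> serlt a b -> serlt a' b'.
Proof.
move=> E [g [p z]]; exists g; split; first by rewrite -E.
by move=> h gh; rewrite -E; apply: z.
Qed.

Lemma serabs_pos (a : M -> k) : serpos a -> serabs a = a.
Proof. by rewrite /serabs; case: excluded_middle_informative. Qed.

Lemma serabs_npos (a : M -> k) : ~ serpos a -> serabs a = seropp a.
Proof. by rewrite /serabs; case: excluded_middle_informative. Qed.

Lemma monom_at b : monom b b = 1.
Proof. by rewrite /monom; case: excluded_middle_informative. Qed.

Lemma monom_off b x : x <> b -> monom b x = 0.
Proof. by rewrite /monom; case: excluded_middle_informative. Qed.

Lemma supp_monom b x : supp (monom b) x -> x = b.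
Proof. by rewrite /supp /monom; case: excluded_middle_informative => // _ /=; rewrite eqxx. Qed.

Lemma monom_nz b : monom b <> @ser0 k M.
Proof.
by move=> /(f_equal (fun f => f b)); rewrite monom_at /ser0 => /eqP; rewrite oner_eq0.
Qed.

Lemma is_ser_on_monom (S : M -> Prop) b : S b -> is_ser_on S (monom b).
Proof.
move=> Sb; split; last by move=> x /supp_monom ->.
move=> Q [x Qx] HQ; exists b.
have Qb : Q b by rewrite -(supp_monom (HQ x Qx)).
by split=> // y /HQ /supp_monom ->; left.
Qed.

Lemma serlt_of_lead (a b : M -> k) m : 0 < b m ->
  (forall h, glt m h -> b h = 0) -> (forall h, gle m h -> a h = 0) -> serlt a b.
Proof.
move=> bm bz az; exists m; split; first by rewrite az ?subr0 //; right.
by move=> h mh; rewrite bz // az ?subr0 //; left.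
Qed.

Hypothesis LM : linear_on M.

Lemma gle_trans (x y z : M) : gvalid x -> gvalid y -> gvalid z ->
  gle x y -> gle y z -> gle x z.
Proof.
move=> vx vy vz [xy|->] // [yz|<-]; last by left.
by left; apply: (glt_trans LM vx vy vz).
Qed.

Lemma anti_wo_max (P : M -> Prop) : (forall x, P x -> gvalid x) -> anti_wo P ->
  (exists x, P x) -> exists m, P m /\ forall h, glt m h -> ~ P h.
Proof.
move=> V W E; have [m [Pm Hm]] := W P E (fun x h => h).
exists m; split=> // h mh Ph; case: (Hm h Ph) => [e|hm].
- by subst; apply: (glt_irr LM mh).
- exact: (glt_irr LM (glt_trans LM (V _ Pm) (V _ Ph) (V _ Pm) mh hm)).
Qed.

(* the union of two anti-well-ordered sets of valid elements is anti-well-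
   ordered: the maximum of a subset is the larger of the two partial maxima *)
Lemma anti_wo_union (P P' : M -> Prop) : (forall x, P x -> gvalid x) ->
  (forall x, P' x -> gvalid x) ->
  anti_wo P -> anti_wo P' -> anti_wo (fun x => P x \/ P' x).
Proof.
move=> V1 V2 W1 W2 Q [x Qx] HQ.
have V : forall y, Q y -> gvalid y by move=> y /HQ [/V1|/V2].
case: (classic (exists y, Q y /\ P y)) => [E1|N1];
  case: (classic (exists y, Q y /\ P' y)) => [E2|N2].
- have [m1 [[Qm1 Pm1] M1]] := W1 (fun y => Q y /\ P y) E1 (fun y h => proj2 h).
  have [m2 [[Qm2 Pm2] M2]] := W2 (fun y => Q y /\ P' y) E2 (fun y h => proj2 h).
  have [lt|[eq|gt]] := glt_total LM (V1 _ Pm1) (V2 _ Pm2).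
  + exists m2; split=> // y Qy; case: (HQ y Qy) => Py; last exact: M2.
    case: (M1 y (conj Qy Py)) => [->|ylt]; first by right.
    by right; apply: (glt_trans LM (V _ Qy) (V1 _ Pm1) (V2 _ Pm2) ylt lt).
  + exists m1; split=> // y Qy; case: (HQ y Qy) => Py; first exact: M1.
    by rewrite eq; apply: M2.
  + exists m1; split=> // y Qy; case: (HQ y Qy) => Py; first exact: M1.
    case: (M2 y (conj Qy Py)) => [->|ylt]; first by right.
    by right; apply: (glt_trans LM (V _ Qy) (V2 _ Pm2) (V1 _ Pm1) ylt gt).
- have [m1 [[Qm1 Pm1] M1]] := W1 (fun y => Q y /\ P y) E1 (fun y h => proj2 h).
  exists m1; split=> // y Qy; case: (HQ y Qy) => Py; first exact: M1.
  by case: N2; exists y.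
- have [m2 [[Qm2 Pm2] M2]] := W2 (fun y => Q y /\ P' y) E2 (fun y h => proj2 h).
  exists m2; split=> // y Qy; case: (HQ y Qy) => Py; last exact: M2.
  by case: N1; exists y.
- by case: (HQ x Qx) => Px; [case: N1|case: N2]; exists x.
Qed.

Lemma is_ser_on_add S (a b : M -> k) : (forall x, S x -> gvalid x) ->
  is_ser_on S a -> is_ser_on S b -> is_ser_on S (seradd a b).
Proof.
move=> V [Wa Ha] [Wb Hb]; split; last by move=> x /supp_add [/Ha|/Hb].
apply: (anti_wo_sub (P' := fun x => supp a x \/ supp b x)); first exact: supp_add.
by apply: anti_wo_union => // x; [move/Ha/V | move/Hb/V].
Qed.

(* the leading point of c - a is the larger of those of c - b and b - a *)
Lemma serlt_trans (a b c : M -> k) : supp_valid a -> supp_valid b -> supp_valid c ->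
  serlt a b -> serlt b c -> serlt a c.
Proof.
move=> Va Vb Vc [g1 [p1 z1]] [g2 [p2 z2]].
have v1 : gvalid g1 by apply: (valid_diff Va Vb); rewrite gt_eqF.
have v2 : gvalid g2 by apply: (valid_diff Vb Vc); rewrite gt_eqF.
have E h : c h - a h = (c h - b h) + (b h - a h) by ring.
have [lt|[eq|gt]] := glt_total LM v1 v2.
- exists g2; split; first by rewrite E (z1 _ lt) addr0.
  move=> h g2h; rewrite E z2 // add0r.
  case: (eqVneq (b h - a h) 0) => // nz; apply: z1.
  exact: (glt_trans LM v1 v2 (valid_diff Va Vb nz) lt g2h).
- subst g2; exists g1; split; first by rewrite E addr_gt0.
  by move=> h hh; rewrite E z1 // z2 // addr0.
- exists g1; split; first by rewrite E (z2 _ gt) add0r.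
  move=> h g1h; rewrite E z1 // addr0.
  case: (eqVneq (c h - b h) 0) => // nz; apply: z2.
  exact: (glt_trans LM v2 v1 (valid_diff Vb Vc nz) gt g1h).
Qed.

Lemma ser_lead (f : M -> k) : is_ser_on (@gvalid M) f -> f <> @ser0 k M ->
  exists m, supp f m /\ forall h, glt m h -> f h = 0.
Proof.
move=> [W H] nz.
have E : exists x, supp f x.
  apply: NNPP => N; apply: nz; apply: ser_ext => x; rewrite /ser0.
  by case: (eqVneq (f x) 0) => // Hx; case: N; exists x.
have [m [Hm Hmax]] := anti_wo_max H W E.
exists m; split=> // h mh; case: (eqVneq (f h) 0) => // Hh.
by case: (Hmax h mh Hh).
Qed.

Lemma serlt_total (a b : M -> k) :
  is_ser_on (@gvalid M) a -> is_ser_on (@gvalid M) b ->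
  serlt a b \/ a = b \/ serlt b a.
Proof.
move=> Sa Sb.
have Sd : is_ser_on (@gvalid M) (seradd b (seropp a)).
  by apply: is_ser_on_add => //; apply: is_ser_on_opp.
case: (classic (seradd b (seropp a) = @ser0 k M)) => [e|nz].
  right; left; apply: ser_ext => x; apply/eqP; rewrite eq_sym -subr_eq0.
  by have := f_equal (fun f => f x) e; rewrite /seradd /seropp /ser0 => ->.
have [g [Hg z]] := ser_lead Sd nz.
case: (ltrgt0P (seradd b (seropp a) g)) => [p|n|e].
- by left; exists g; split; [exact: p | move=> h /z].
- right; right; exists g; split=> [|h /z]; rewrite /seradd /seropp.
  + by rewrite -oppr_lt0 opprB; exact: n.
  + by move/eqP; rewrite -oppr_eq0 opprB => /eqP.
- by move: Hg; rewrite /supp e eqxx.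
Qed.

Lemma serabs_lead (f : M -> k) m : supp_valid f -> supp f m ->
  (forall h, glt m h -> f h = 0) ->
  0 < serabs f m /\ (forall h, glt m h -> serabs f h = 0).
Proof.
move=> Vf fm z; have vm := Vf _ fm.
case: (classic (serpos f)) => [Hp|np]; last first.
  rewrite serabs_npos //; split; last by move=> h mh; rewrite /seropp z // oppr0.
  rewrite /seropp oppr_gt0; case: (ltrgt0P (f m)) => // [p|e].
  + case: np; exists m; rewrite /ser0 subr0; split=> // h mh.
    by rewrite z // subr0.
  + by move: fm; rewrite /supp e eqxx.
rewrite serabs_pos //; split=> //.
have [g [p0 zg]] := Hp; move: p0 zg; rewrite /ser0 subr0 => p zg.
have vg : gvalid g by apply: Vf; rewrite /supp gt_eqF.
have [lt|[<-|gt]] := glt_total LM vg vm => //.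
- by move: fm (zg m lt); rewrite /supp subr0 => /eqP.
- by rewrite (z g gt) ltxx in p.
Qed.

Lemma monom_pos b : serpos (monom b).
Proof.
exists b; rewrite /ser0 monom_at subr0; split=> // h bh.
by rewrite monom_off ?subr0 // => e; subst; apply: (glt_irr LM bh).
Qed.

Lemma serabs_monom b : serabs (monom b) = monom b.
Proof. exact/serabs_pos/monom_pos. Qed.

Lemma serlt_lead_neg (x c : M -> k) m : supp_valid x -> supp_valid c -> supp x m ->
  (forall h, glt m h -> x h = 0) -> (forall z, gle m z -> c z = 0) ->
  serlt x c -> x m < 0.
Proof.
move=> Vx Vc xm xz cz [g [p zg]].
have vg : gvalid g by apply: (valid_diff Vx Vc); rewrite gt_eqF.
have [gm|[gm|mg]] := glt_total LM vg (Vx _ xm).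
- move: (zg m gm); rewrite (cz m (or_intror erefl)) sub0r => /eqP.
  by rewrite oppr_eq0 => /eqP x0; move: xm; rewrite /supp x0 eqxx.
- by subst m; move: p; rewrite (cz g (or_intror erefl)) sub0r oppr_gt0.
- by move: p; rewrite (cz g (or_introl mg)) (xz g mg) subrr ltxx.
Qed.

Lemma supp_below_monom (x : M -> k) b : is_ser_on (@gvalid M) x -> gvalid b ->
  serlt x (monom b) -> serlt (seropp x) (monom b) -> forall y, supp x y -> gle y b.
Proof.
move=> Sx vb lt1 lt2 y xy.
have Vx : supp_valid x := is_ser_on_supp_valid (fun _ v => v) Sx.
have Vb : supp_valid (monom b) by move=> t /supp_monom ->.
have nz : x <> @ser0 k M by move=> e; move: xy; rewrite e /supp /ser0 eqxx.
have [m [xm xz]] := ser_lead Sx nz.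
have vm := Vx _ xm; have vy := Vx _ xy.
have ym : gle y m.
  have [|[->|my]] := glt_total LM vy vm; [by left|by right|].
  by move: xy; rewrite /supp xz ?eqxx.
apply: (gle_trans vy vm vb ym).
have [|[->|bm]] := glt_total LM vm vb; [by left|by right|exfalso].
have bz : forall z, gle m z -> monom b z = 0.
  move=> z mz; apply: monom_off => e; subst z.
  case: mz => [mb|e]; first exact: (glt_irr LM (glt_trans LM vb vm vb bm mb)).
  by subst; apply: (glt_irr LM bm).
have neg1 := serlt_lead_neg Vx Vb xm xz bz lt1.
have neg2 : seropp x m < 0.
  apply: (serlt_lead_neg _ Vb _ _ bz lt2).
  - by move=> t /supp_opp /Vx.
  - exact/supp_opp.
  - by move=> h mh; rewrite /seropp xz // oppr0.
by move: neg2; rewrite /seropp oppr_lt0 => /(lt_trans neg1); rewrite ltxx.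
Qed.

End Series.

Section Sharp.
Variable k : realFieldType.
Variable M : ROG.
Hypothesis LM : linear_on M.

Lemma sharp_valid_ser (x : sharp k M) : gvalid x -> is_ser_on (@gvalid M) x.
Proof. by apply: is_ser_on_mono => t []. Qed.

Lemma sharp_valid_supp (x : sharp k M) : gvalid x -> supp_valid x.
Proof. by move/sharp_valid_ser; apply: is_ser_on_supp_valid. Qed.

Lemma sharp_valid_add (x y : sharp k M) :
  gvalid x -> gvalid y -> gvalid (seradd x y : sharp k M).
Proof. by move=> vx vy; apply: (is_ser_on_add LM) => // t []. Qed.

Lemma sharp_valid_opp (x : sharp k M) : gvalid x -> gvalid (seropp x : sharp k M).
Proof. exact: is_ser_on_opp. Qed.

Lemma sharp_valid_abs (x : sharp k M) : gvalid x -> gvalid (serabs x : sharp k M).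
Proof.
case: (classic (serpos x)) => [p|np]; first by rewrite serabs_pos.
by rewrite serabs_npos //; apply: sharp_valid_opp.
Qed.

Lemma linear_on_sharp : linear_on (sharp k M).
Proof.
split=> [x|x y z /sharp_valid_supp vx /sharp_valid_supp vy /sharp_valid_supp vz|x y|].
- exact: serlt_irr.
- exact: serlt_trans.
- by move=> /sharp_valid_ser vx /sharp_valid_ser vy; apply: serlt_total.
- exact: is_ser_on0.
Qed.

Lemma gle_diff_ext (a b a' b' : sharp k M) :
  (forall t, b t - a t = b' t - a' t) -> gle a b -> gle a' b'.
Proof.
move=> E [lt|eq]; first by left; apply: serlt_diff_ext lt.
right; apply: ser_ext => t; apply/eqP; rewrite eq_sym -subr_eq0.
by rewrite -E eq subrr.
Qed.

End Sharp.

Section Push.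
Variable k : realFieldType.
Variables M N : ROG.
Variable phi : M -> N.
Hypothesis phi_inj : forall x y, phi x = phi y -> x = y.

Lemma push_phi (a : M -> k) x : push phi a (phi x) = a x.
Proof.
rewrite /push; case: excluded_middle_informative => [H|[]] /=; last by exists x.
by case: (constructive_indefinite_description _ H) => z /= /phi_inj ->.
Qed.

Lemma push_out (a : M -> k) y : ~ (exists x, phi x = y) -> push phi a y = 0.
Proof. by move=> H; rewrite /push; case: excluded_middle_informative. Qed.

Lemma push_cases (a : M -> k) y :
  (~ (exists x, phi x = y) /\ push phi a y = 0) \/
  exists x, phi x = y /\ push phi a y = a x.
Proof.
case: (classic (exists x, phi x = y)) => [[x <-]|H].
- by right; exists x; rewrite push_phi.
- by left; split=> //; apply: push_out.
Qed.

Lemma push_add (a b : M -> k) :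
  push phi (seradd a b) = seradd (push phi a) (push phi b).
Proof.
apply: ser_ext => y; rewrite /seradd.
case: (push_cases (seradd a b) y) => [[H ->]|[x [<- ->]]].
- by rewrite !push_out // addr0.
- by rewrite !push_phi.
Qed.

Lemma push_opp (a : M -> k) : push phi (seropp a) = seropp (push phi a).
Proof.
apply: ser_ext => y; rewrite /seropp.
case: (push_cases (seropp a) y) => [[H ->]|[x [<- ->]]].
- by rewrite !push_out // oppr0.
- by rewrite !push_phi.
Qed.

Lemma push0 : push phi (@ser0 k M) = @ser0 k N.
Proof.
apply: ser_ext => y; rewrite /ser0.
by case: (push_cases (@ser0 k M) y) => [[H ->]|[x [<- ->]]].
Qed.

Lemma push_inj (a b : M -> k) : push phi a = push phi b -> a = b.
Proof. by move=> e; apply: ser_ext => x; rewrite -(push_phi a) -(push_phi b) e. Qed.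

Lemma supp_push (a : M -> k) y :
  supp (push phi a) y -> exists x, phi x = y /\ supp a x.
Proof.
case: (push_cases a y) => [[H e]|[x [ex e]]]; first by rewrite /supp e eqxx.
by rewrite /supp e => h; exists x.
Qed.

Hypothesis LM : linear_on M.
Hypothesis LN : linear_on N.
Hypothesis phi_mono :
  forall x y, gvalid x -> gvalid y -> glt x y -> glt (phi x) (phi y).
Hypothesis phi_valid : forall x, gvalid x -> gvalid (phi x).

Lemma push_lt (a b : M -> k) : supp_valid a -> supp_valid b ->
  serlt a b -> serlt (push phi a) (push phi b).
Proof.
move=> Va Vb [g [p zg]].
have vg : gvalid g by apply: (valid_diff Va Vb); rewrite gt_eqF.
exists (phi g); rewrite !push_phi; split=> // y gy.
case: (classic (exists x, phi x = y)) => [[x ex]|H]; last by rewrite !push_out // subr0.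
subst y; rewrite !push_phi; case: (eqVneq (b x - a x) 0) => // nz.
have vx := valid_diff Va Vb nz.
have [xg|[xg|gx]] := glt_total LM vx vg; last exact: zg.
- case: (glt_irr LN (x := phi x)).
  exact: (glt_trans LN (phi_valid vx) (phi_valid vg) (phi_valid vx) (phi_mono vx vg xg) gy).
- by subst; case: (glt_irr LN gy).
Qed.

Lemma push_zero_above (a : M -> k) m : supp_valid a -> gvalid m ->
  (forall y, supp a y -> glt (phi y) m) -> forall z, gle m z -> push phi a z = 0.
Proof.
move=> Va vm below z mz; case: (push_cases a z) => [[_ ->]//|[x [ex ->]]].
subst z;
case: (eqVneq (a x) 0) => // ax; exfalso.
have vx := phi_valid (Va _ ax); have xm := below x ax.
case: mz => [mx|e]; last by rewrite e in xm; apply: (glt_irr LN xm).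
exact: (glt_irr LN (glt_trans LN vx vm vx xm mx)).
Qed.

Hypothesis phi_pos : forall x, gvalid x -> glt (gone M) x -> glt (gone N) (phi x).

Lemma push_valid (a : M -> k) :
  is_ser_on (fun x => gvalid x /\ glt (gone M) x) a ->
  is_ser_on (fun y => gvalid y /\ glt (gone N) y) (push phi a).
Proof.
move=> [W H]; split; last first.
  move=> y /supp_push [x [<- /H [vx px]]].
  by split; [apply: phi_valid | apply: phi_pos].
move=> Q [y Qy] HQ.
have [x0 [ex0 sx0]] := supp_push (HQ y Qy).
have E : exists x, supp a x /\ Q (phi x) by exists x0; rewrite ex0.
have [m [[sm Qm] Mm]] := W (fun x => supp a x /\ Q (phi x)) E (fun x h => proj1 h).
exists (phi m); split=> // z Qz.
have [x [ex sx]] := supp_push (HQ z Qz); subst z.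
case: (Mm x (conj sx Qz)) => [->|lt]; first by left.
by right; apply: phi_mono => //; [apply: (proj1 (H _ sx)) | apply: (proj1 (H _ sm))].
Qed.

End Push.

(* It identifies g with the symbol e(u g) of M^#. *)
Record prelog_section (k : realFieldType) (M : ROG) (u : M -> sharp k M) : Prop :=
  PrelogSection {
  pl_inj : forall x y, u x = u y -> x = y;
  pl_mul : forall x y, u (gop x y) = seradd (u x) (u y);
  pl_inv : forall x, u (ginv x) = seropp (u x);
  pl_one : u (gone M) = @ser0 k M;
  pl_mono : forall x y, gvalid x -> gvalid y -> glt x y -> glt (u x) (u y);
  pl_valid : forall x, gvalid x -> gvalid (u x) }.

(* the exponential extension l^# of a prelogarithmic section l is again one;
   l^# is the pushforward of series along l *)
Lemma prelog_push (k : realFieldType) (M : ROG) (u : M -> sharp k M) :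
  linear_on M -> prelog_section u ->
  prelog_section (push u : sharp k M -> sharp k (sharp k M)).
Proof.
move=> LM U; have LN := linear_on_sharp k LM.
split.
- by move=> x y /push_inj; apply; apply: pl_inj U.
- exact: push_add (pl_inj U).
- exact: push_opp (pl_inj U).
- exact: push0 (pl_inj U).
- move=> x y vx vy; apply: (push_lt (pl_inj U) LM LN (pl_mono U) (pl_valid U));
    exact: sharp_valid_supp.
- move=> x; apply: (push_valid (pl_inj U) (pl_mono U) (pl_valid U)) => t vt pt.
  by have := pl_mono U (gone_valid LM) vt pt; rewrite (pl_one U).
Qed.

Section Base.
Variables (k : realFieldType) (G : ROG) (l : G -> (G -> k)).
Hypothesis HGall : forall x : G, gvalid x.
Hypothesis HG : ordered_abelian_group (@gop G) (gone G) (@ginv G) (@glt G).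
Hypothesis Hl_ser : forall g : G, @is_ser_on k G (fun x => glt (gone G) x) (l g).
Hypothesis Hl_mul : forall g h : G, l (gop g h) = @seradd k G (l g) (l h).
Hypothesis Hl_mono : forall g h : G, glt g h -> @serlt k G (l g) (l h).

Lemma linear_on_base : linear_on G.
Proof.
have [_ [_ [_ [_ [irr [trans [tot _]]]]]]] := HG.
by split=> [x|x y z _ _ _|x y _ _|]; [apply: irr | apply: trans | apply: tot | apply: HGall].
Qed.

Lemma prelog_base : prelog_section (l : G -> sharp k G).
Proof.
have [_ [_ [Hu [Hi [_ [_ [tot _]]]]]]] := HG.
have l1 : l (gone G) = @ser0 k G.
  apply: ser_ext => x; apply: (@addrI _ (l (gone G) x)).
  have := f_equal (fun f => f x) (Hl_mul (gone G) (gone G)).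
  by rewrite Hu /seradd /ser0 addr0 => <-.
split=> //.
- move=> x y e; have [lt|[//|gt]] := tot x y.
  + by have := Hl_mono lt; rewrite e => /serlt_irr.
  + by have := Hl_mono gt; rewrite e => /serlt_irr.
- move=> x; apply: ser_ext => t; rewrite /seropp; apply/eqP; rewrite -addr_eq0.
  have := f_equal (fun f => f t) (Hl_mul (ginv x) x).
  by rewrite Hi l1 /seradd /ser0 => <-.
- by move=> x y _ _; apply: Hl_mono.
- by move=> x _; apply: is_ser_on_mono (Hl_ser x) => t tt; split.
Qed.

Lemma tower_levels n : linear_on (lvl k G n) /\ prelog_section (@up k G l n).
Proof.
elim: n => [|n [Ln Un]]; first by split; [apply: linear_on_base | apply: prelog_base].
by split; [apply: linear_on_sharp | apply: prelog_push].
Qed.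

End Base.

Record tower_inv (k : realFieldType) (G : ROG) (l : G -> (G -> k))
    (H : G -> Prop) (n : nat) : Prop := TowerInv {
  inv_valid : forall x, @Hpow k G l H n x -> gvalid x;
  inv_subgroup : @subgroup (lvl k G n) (@Hpow k G l H n);
  inv_growth : @growth_rel k G l n (@Hpow k G l H n)
    (@above (lvl k G n) (@Hpow k G l H n) (@HP k G l H n).2);
  inv_above : exists b, @above (lvl k G n) (@Hpow k G l H n) (@HP k G l H n).2 b;
  inv_prev_one : (@HP k G l H n).2 (gone _) }.

Section Step.
Variables (k : realFieldType) (G : ROG) (l : G -> (G -> k)) (H : G -> Prop).
Hypothesis lin : forall m, linear_on (lvl k G m).
Hypothesis pre : forall m, prelog_section (@up k G l m).
Variable n : nat.
Hypothesis IHn : tower_inv l H n.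

Local Notation A := (@Hpow k G l H n).
Local Notation S := (@above (lvl k G n) A (@HP k G l H n).2).
Local Notation u := (@up k G l n).
Local Notation U := (pre n).
Local Notation HnE := (@img_of (lvl k G n) (lvl k G n.+1) u A).
Local Notation E := (@Expset k G n S).
Local Notation Hn1 := (@Hpow k G l H n.+1).

Lemma mem_Hn1 x : Hn1 x <-> exists a al, A a /\ E al /\ x = seradd (u a) al.
Proof.
split; first by move=> [_ [b [[a [Aa <-]] [Eb ->]]]]; exists a, b.
by move=> [a [al [Aa [Eal ->]]]]; exists (u a), al; split=> //; exists a.
Qed.

Lemma A_one : A (gone _). Proof. exact: (inv_subgroup IHn).1. Qed.
Lemma A_mul x y : A x -> A y -> A (gop x y). Proof. exact: (inv_subgroup IHn).2.1. Qed.
Lemma A_inv x : A x -> A (ginv x). Proof. exact: (inv_subgroup IHn).2.2. Qed.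

Lemma S_A x : S x -> A x. Proof. by case. Qed.
Lemma S_valid x : S x -> gvalid x. Proof. by move=> /S_A /(inv_valid IHn). Qed.
Lemma S_pos x : S x -> glt (gone _) x.
Proof. by move=> [_]; apply; apply: (inv_prev_one IHn). Qed.

Lemma u_valid a : A a -> gvalid (u a).
Proof. by move=> /(inv_valid IHn) /(pl_valid U). Qed.

Lemma E_valid al : E al -> gvalid al. Proof. by case. Qed.
Lemma E_ser al : E al -> is_ser_on S al. Proof. by case. Qed.

Lemma E_subgroup : @subgroup (lvl k G n.+1) E.
Proof.
have SV : forall x, S x -> gvalid x by move=> x /S_valid.
split; first by split; apply: is_ser_on0.
split=> [x y [vx sx] [vy sy]|x [vx sx]].
- by split; [apply: sharp_valid_add | apply: (is_ser_on_add (lin n))].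
- by split; apply: is_ser_on_opp.
Qed.

Lemma Hn1_valid x : Hn1 x -> gvalid x.
Proof.
move=> /mem_Hn1 [a [al [Aa [Eal ->]]]].
by apply: sharp_valid_add (lin n) _ _ (u_valid Aa) (E_valid Eal).
Qed.

Lemma Hn1_subgroup : @subgroup (lvl k G n.+1) Hn1.
Proof.
have [E1 [Emul Einv]] := E_subgroup.
split; [|split].
- apply/mem_Hn1; exists (gone _), (@ser0 k _); split; first exact: A_one.
  by split=> //; rewrite (pl_one U) seradd0r.
- move=> x y /mem_Hn1 [a [al [Aa [Eal ->]]]] /mem_Hn1 [b [be [Ab [Ebe ->]]]].
  apply/mem_Hn1; exists (gop a b), (seradd al be).
  split; first exact: A_mul. split; first exact: Emul.
  by rewrite (pl_mul U); apply: ser_ext => t /=; rewrite /seradd; ring.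
- move=> x /mem_Hn1 [a [al [Aa [Eal ->]]]].
  apply/mem_Hn1; exists (ginv a), (seropp al).
  split; first exact: A_inv. split; first exact: Einv.
  by rewrite (pl_inv U); apply: ser_ext => t /=; rewrite /seradd /seropp; ring.
Qed.

Lemma HnE_subgroup : @subgroup (lvl k G n.+1) HnE.
Proof.
split; [|split].
- by exists (gone _); split; [apply: A_one | apply: (pl_one U)].
- move=> _ _ [a [Aa <-]] [b [Ab <-]].
  by exists (gop a b); split; [apply: A_mul | apply: (pl_mul U)].
- move=> _ [a [Aa <-]].
  by exists (ginv a); split; [apply: A_inv | apply: (pl_inv U)].
Qed.

Lemma HnE_Hn1 x : HnE x -> Hn1 x.
Proof.
move=> [a [Aa <-]]; apply/mem_Hn1; exists a, (@ser0 k _).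
by split=> //; split; [exact: E_subgroup.1 | rewrite seradd0r].
Qed.

Lemma growth_not_dominated a al : A a -> E al -> al <> @ser0 k _ ->
  ~ gle (serabs al : lvl k G n.+1) (u a).
Proof.
move=> Aa Eal nz le.
have lt : serlt (u a) (serabs al) := inv_growth IHn Aa (E_ser Eal) nz.
case: le => [gt|eq]; last by rewrite eq in lt; apply: (serlt_irr lt).
have va := u_valid Aa; have vabs := sharp_valid_abs (E_valid Eal).
exact: (glt_irr (lin n.+1) (glt_trans (lin n.+1) va vabs va lt gt)).
Qed.

Lemma HnE_E_trivial x : HnE x -> E x -> x = gone _.
Proof.
move=> [a [Aa <-]] Ea; apply: NNPP => nz.
case: (classic (serpos (u a))) => [p|np].
- by apply: (growth_not_dominated Aa Ea nz); rewrite serabs_pos //; right.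
- apply: (growth_not_dominated (A_inv Aa) Ea nz).
  by rewrite serabs_npos // (pl_inv U); right.
Qed.

Lemma monom_above_HnE b : S b ->
  Hn1 (monom k b) /\ forall p, HnE p -> glt p (monom k b : lvl k G n.+1).
Proof.
move=> Sb; split.
- apply/mem_Hn1; exists (gone _), (monom k b); split; first exact: A_one.
  split; last by rewrite (pl_one U) seradd0l.
  split; apply: is_ser_on_monom => //.
  by split; [apply: S_valid | apply: S_pos].
- move=> _ [a [Aa <-]].
  have := inv_growth IHn Aa (is_ser_on_monom k Sb) (@monom_nz k _ b).
  by rewrite (serabs_monom k (lin n)).
Qed.

Lemma HnE_proper : exists x, Hn1 x /\ ~ HnE x.
Proof.
have [b Sb] := inv_above IHn; have [Hb above_b] := monom_above_HnE Sb.
by exists (monom k b); split=> // /above_b /(glt_irr (lin n.+1)).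
Qed.

(* convexity: u(c1) <= u(a) + al <= u(c2) with al /= 0 would let |al| be
   dominated by u(c2/a) or u(a/c1), contradicting the growth axiom *)
Lemma HnE_convex : @convex_in (lvl k G n.+1) HnE Hn1.
Proof.
move=> _ _ x [c1 [Ac1 <-]] [c2 [Ac2 <-]] /mem_Hn1 [a [al [Aa [Eal ->]]]] h1 h2.
case: (classic (al = @ser0 k _)) => [->|nz]; first by exists a; rewrite seradd0r.
exfalso; case: (classic (serpos al)) => sp.
- apply: (growth_not_dominated (A_mul Ac2 (A_inv Aa)) Eal nz).
  rewrite serabs_pos // (pl_mul U) (pl_inv U).
  by apply: gle_diff_ext h2 => t; rewrite /seradd /seropp; ring.
- apply: (growth_not_dominated (A_mul Aa (A_inv Ac1)) Eal nz).
  rewrite serabs_npos // (pl_mul U) (pl_inv U).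
  by apply: gle_diff_ext h1 => t; rewrite /seradd /seropp; ring.
Qed.

(* every monomial of an element u(a) + al of H^{n+1} is bounded by an
   element of H^n: those of al lie in S, and those of u(a) lie below any
   b in S, since |u(a)| < b by the growth axiom *)
Lemma Hn1_supp_bounded h : Hn1 h -> forall y, supp h y -> exists z, A z /\ gle y z.
Proof.
move=> /mem_Hn1 [a [al [Aa [Eal ->]]]] y /supp_add [sy|sy]; last first.
  by exists y; split; [apply: S_A ((E_ser Eal).2 y sy) | right].
have [b Sb] := inv_above IHn.
exists b; split; first exact: S_A.
have below_b a' : A a' -> serlt (u a') (monom k b).
  move=> Aa'; rewrite -(serabs_monom k (lin n) b).
  exact: (inv_growth IHn Aa' (is_ser_on_monom k Sb) (@monom_nz k _ b)).
apply: (supp_below_monom (lin n) _ (S_valid Sb) (below_b _ Aa)) => //.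
- exact: sharp_valid_ser (u_valid Aa).
- by rewrite -(pl_inv U); apply/below_b/A_inv.
Qed.

(* growth axiom at level n+1: the leading monomial m of f lies above u(H^n),
   so Log h = u_* h vanishes from m upward, while |f| is positive at m *)
Lemma Hn1_growth : @growth_rel k G l n.+1 Hn1 (@above (lvl k G n.+1) Hn1 HnE).
Proof.
move=> h Hh f Sf nz.
have Vf : is_ser_on (@gvalid _) f by apply: is_ser_on_mono Sf => t [/Hn1_valid].
have [m [fm mz]] := ser_lead (lin n.+1) Vf nz.
have Vh := sharp_valid_supp (Hn1_valid Hh).
have below_m : forall y, supp h y -> glt (u y) m.
  move=> y sy; have [z [Az yz]] := Hn1_supp_bounded Hh sy.
  have zm : glt (u z) m := (Sf.2 m fm).2 (u z) (ex_intro _ z (conj Az erefl)).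
  case: yz => [yz|->] //; have vy := Vh y sy; have vz := inv_valid IHn Az.
  exact: (glt_trans (lin n.+1) (pl_valid U vy) (pl_valid U vz) (Vf.2 m fm)
    (pl_mono U vy vz yz) zm).
have [pos zer] := serabs_lead (lin n.+1) (is_ser_on_supp_valid (fun _ v => v) Vf) fm mz.
apply: (serlt_of_lead pos zer).
exact: (push_zero_above (pl_inj U) (lin n.+1) (pl_valid U) Vh (Vf.2 m fm) below_m).
Qed.

Lemma step_conclusion :
  @proper_convex_subgroup (lvl k G n.+1) HnE Hn1 /\
  @antilex_product (lvl k G n.+1) HnE E Hn1 /\
  @growth_rel k G l n.+1 Hn1 (@above (lvl k G n.+1) Hn1 HnE).
Proof.
split; [|split]; last exact: Hn1_growth.
- exact: (conj HnE_subgroup (conj Hn1_subgroup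
    (conj HnE_Hn1 (conj HnE_proper HnE_convex)))).
- exact: (conj HnE_subgroup (conj E_subgroup
    (conj (fun x => iff_refl (Hn1 x)) (conj HnE_E_trivial HnE_convex)))).
Qed.

(* the invariant at level n+1; a monomial of S witnesses (H^{n+1})^{>H^n} *)
Lemma tower_inv_succ : tower_inv l H n.+1.
Proof.
have [b Sb] := inv_above IHn; have [Hb above_b] := monom_above_HnE Sb.
split; [exact: Hn1_valid | exact: Hn1_subgroup | exact: Hn1_growth | |].
- by exists (monom k b).
- exact: HnE_subgroup.1.
Qed.

End Step.

(* the invariant at level 0 follows from the hypotheses on H; a nontrivial
   subgroup contains an element above 1 (h or its inverse) *)
Lemma tower_inv0 (k : realFieldType) (G : ROG) (l : G -> (G -> k)) (H : G -> Prop) :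
  (forall x : G, gvalid x) ->
  ordered_abelian_group (@gop G) (gone G) (@ginv G) (@glt G) ->
  @subgroup G H -> (exists h, H h /\ h <> gone G) ->
  @growth_rel k G l 0 H (@above G H (fun x => x = gone G)) ->
  tower_inv l H 0.
Proof.
move=> HGall [_ [Hc [Hu [Hi [_ [_ [tot tr]]]]]]] HH [h [Hh nh]] growth.
split; [by move=> x _; apply: HGall | exact: HH | exact: growth | | by []].
have [lt|[e|gt]] := tot h (gone G); last first.
- by exists h; split=> // _ ->.
- by case: nh.
- exists (ginv h); split; first exact: HH.2.2.
  by move=> _ ->; have := tr _ _ (ginv h) lt; rewrite Hc Hi Hu.
Qed.

Unset Implicit Arguments. Set Strict Implicit.
Theorem proposition8
  (k : realFieldType) (log : k -> k)
  (Hlog_mul : forall a b : k, 0 < a -> 0 < b -> log (a * b) = log a + log b)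
  (Hlog_mono : forall a b : k, 0 < a -> a < b -> log a < log b)
  (Hlog_surj : forall y : k, exists x : k, 0 < x /\ log x = y)
  (G : ROG)
  (HGall : forall x : G, gvalid x)
  (HG : ordered_abelian_group (@gop G) (gone G) (@ginv G) (@glt G))
  (l : G -> (G -> k))
  (Hl_ser : forall g : G, @is_ser_on k G (fun x => glt (gone G) x) (l g))
  (Hl_mul : forall g h : G, l (gop g h) = @seradd k G (l g) (l h))
  (Hl_mono : forall g h : G, glt g h -> @serlt k G (l g) (l h))
  (H : G -> Prop)
  (HH_sub : @subgroup G H)
  (HH_nontriv : exists h, H h /\ h <> gone G)
  (HH_growth : @growth_rel k G l 0 H (@above G H (fun x => x = gone G))) :
  forall n : nat,
    let Hn := @Hpow k G l H n in
    let Hn1 := @Hpow k G l H n.+1 in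
    let Hprev := (@HP k G l H n).2 in
    let HnE := @img_of (lvl k G n) (lvl k G n.+1) (@up k G l n) Hn in
    let E := @Expset k G n (@above (lvl k G n) Hn Hprev) in
    @proper_convex_subgroup (lvl k G n.+1) HnE Hn1 /\
    @antilex_product (lvl k G n.+1) HnE E Hn1 /\
    @growth_rel k G l n.+1 Hn1 (@above (lvl k G n.+1) Hn1 HnE).
Proof.
have levels := tower_levels HGall HG Hl_ser Hl_mul Hl_mono.
have lin m : linear_on (lvl k G m) := (levels m).1.
have pre m : prelog_section (@up k G l m) := (levels m).2.
have inv : forall m, tower_inv l H m.
  elim=> [|m IHm]; first exact: tower_inv0 HGall HG HH_sub HH_nontriv HH_growth.
  exact: (@tower_inv_succ k G l H lin pre m IHm).
by move=> n; exact: (@step_conclusion k G l H lin pre n (inv n)).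
Qed.
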